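(* Fix a round $r$. Let $\mathcal V^r$ be the multiset of all disseminated perturbed adoption vectors in round $r$, $V^r=|\mathcal V^r|$, and for each agent $i$ let $\mathcal V^r_i\subseteq\mathcal V^r$ be the sub-multiset sampled by $i$, $V^r_i=|\mathcal V^r_i|$. Let $\Lambda^r_{i,j}=\frac1{V^r_i}\sum_{\widetilde{\mathbf X}\in\mathcal V^r_i}[\widetilde{\mathbf X}]_j$ and $\Lambda^r_j=\frac1{V^r}\sum_{\widetilde{\mathbf X}\in\mathcal V^r}[\widetilde{\mathbf X}]_j$. Assume the $\frac1{N^3}$-nearly uniform distribution holds in round $r$, i.e., each token independently ends at each given agent with probability in $[\frac1N-\frac1{N^3},\frac1N+\frac1{N^3}]$ (which happens with probability at least $1-N^{-h/3}$). Then for all agents $i$ and options $j$, $$\xi_0\le\frac{\mathbb E\left[\Lambda^r_{i,j}\,\middle|\,V^r_i,\widetilde{\mathcal X}^r\right]}{\Lambda^r_j}\le\xi_1,$$ where $$\xi_0=\left(1-\frac{2}{N^2+1}\right)^{V^r_i}\left(1-\frac{2}{N^3-N^2+1}\right)^{V^r-V^r_i},\qquad \xi_1=\left(1+\frac{2}{N^2-1}\right)^{V^r_i}\left(1+\frac{2}{N^3-N^2-1}\right)^{V^r-V^r_i}.$$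
   Context: Agents $\mathcal N=\{1,\dots,N\}$ form a connected non-bipartite graph. In round $r$, each agent that adopted an option in round $r-1$ has a perturbed adoption vector $\widetilde{\mathbf X}^r_i\in\{0,1\}^M$ (obtained by independently flipping each coordinate of its adoption vector with probability $\frac1{e^{\varepsilon/2}+1}$); $\widetilde{\mathcal X}^r=\{\widetilde{\mathbf X}^r_i\}_i$. Each such agent launches $hg(N)$ independent Metropolis–Hastings random walk tokens carrying its vector (so $\mathcal V^r$ consists of $hg(N)$ copies of each perturbed vector), where $h=16\sigma/(1-\beta)$, $\sigma\ge11$, $\beta\in(1/2,1)$, and $g:\mathbb N^+\to\mathbb R$ satisfies $\ell\ln N<g(N)<\ell N$ for every $\ell>0$ and all sufficiently large $N$. A token is sampled by the agent at which its walk ends. $[\widetilde{\mathbf X}]_j$ denotes the $j$-th coordinate. *)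

From mathcomp Require Import all_boot all_order all_algebra.
Set Implicit Arguments. Unset Strict Implicit. Unset Printing Implicit Defensive.
Import Order.TTheory GRing.Theory Num.Theory.
Local Open Scope ring_scope.

(* Tokens are indexed by 'I_V (V = V^r = |calV^r|); token t
   carries the perturbed vector x t : 'I_M -> bool.  The perturbed vectors
   (hence x) are fixed: everything is conditioned on tilde-calX^r.
   Agents are 'I_N.  An outcome is an endpoint assignment
   a : {ffun 'I_V -> 'I_N} (token t ends, and is sampled, at agent a t).
   Tokens end independently, token t at agent k with probability p t k. *)

Section Defs.
Variables (R : realFieldType) (N M V : nat).
Variables (x : 'I_V -> 'I_M -> bool) (p : 'I_V -> 'I_N -> R).

Definition prob (a : {ffun 'I_V -> 'I_N}) : R := \prod_(t < V) p t (a t).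

Definition sampled (i : 'I_N) (a : {ffun 'I_V -> 'I_N}) : {set 'I_V} :=
  [set t | a t == i].

Definition Vi (i : 'I_N) (a : {ffun 'I_V -> 'I_N}) : nat := #|sampled i a|.

Definition Lam_ij (i : 'I_N) (j : 'I_M) (a : {ffun 'I_V -> 'I_N}) : R :=
  (\sum_(t in sampled i a) (x t j)%:R) / (Vi i a)%:R.

Definition Lam_j (j : 'I_M) : R := (\sum_(t < V) (x t j)%:R) / V%:R.

Definition prob_Vi (i : 'I_N) (n : nat) : R :=
  \sum_(a : {ffun 'I_V -> 'I_N} | Vi i a == n) prob a.

Definition cond_exp_Lam (i : 'I_N) (j : 'I_M) (n : nat) : R :=
  (\sum_(a : {ffun 'I_V -> 'I_N} | Vi i a == n) prob a * Lam_ij i j a)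
    / prob_Vi i n.

End Defs.

Definition nearly_uniform (R : realFieldType) (N V : nat)
  (p : 'I_V -> 'I_N -> R) : Prop :=
  (forall t, \sum_(k < N) p t k = 1) /\
  (forall t k, (N%:R)^-1 - (N%:R ^+ 3)^-1 <= p t k <= (N%:R)^-1 + (N%:R ^+ 3)^-1).

Definition xi0 (R : realFieldType) (N V n : nat) : R :=
  (1 - 2 / (N%:R ^+ 2 + 1)) ^+ n *
  (1 - 2 / (N%:R ^+ 3 - N%:R ^+ 2 + 1)) ^+ (V - n).

Definition xi1 (R : realFieldType) (N V n : nat) : R :=
  (1 + 2 / (N%:R ^+ 2 - 1)) ^+ n *
  (1 + 2 / (N%:R ^+ 3 - N%:R ^+ 2 - 1)) ^+ (V - n).

From mathcomp Require Import all_boot all_order all_algebra all_fingroup.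
From mathcomp Require Import lra ring.
Import Order.TTheory GRing.Theory Num.Theory.
Local Open Scope ring_scope.
Set Implicit Arguments. Unset Strict Implicit. Unset Printing Implicit Defensive.

(* Given V_i = n, the set S of tokens sampled by agent i has weight
   w(S) = prod_(t in S) p_t(i) * prod_(t notin S) (1 - p_t(i)), and Lambda_{i,j}
   is the average of [X_t]_j over S.  Near-uniformity puts every w(S) with
   |S| = n between lo = l^n (1 - u)^(V-n) and hi = u^n (1 - l)^(V-n), where
   l, u = 1/N -+ 1/N^3.  The conditional expectation is thus a weighted mean,
   within the factors lo/hi and hi/lo of the unweighted mean over all n-subsets,
   and by symmetry that unweighted mean is Lambda_j.  Finally xi_0 = lo/hi and
   xi_1 = hi/lo. *)

Lemma weighted_mean_ratio_bounds (R : realFieldType) (I : finType) (P : {pred I})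
    (w f : I -> R) (lo hi : R) :
  0 < lo -> (forall s, s \in P -> lo <= w s <= hi) ->
  (forall s, s \in P -> 0 <= f s) -> 0 < (\sum_(s in P) f s) / #|P|%:R ->
  lo / hi <= ((\sum_(s in P) w s * f s) / \sum_(s in P) w s)
               / ((\sum_(s in P) f s) / #|P|%:R) <= hi / lo.
Proof.
move=> lo_gt0 w_bnd f_ge0 mean_gt0.
set F := \sum_(s in P) f s in mean_gt0 *; set W := \sum_(s in P) w s.
set G := \sum_(s in P) w s * f s; set k : R := #|P|%:R in mean_gt0 *.
have F_gt0 : 0 < F.
  rewrite lt0r sumr_ge0 ?andbT //; apply: contraTneq mean_gt0 => ->.
  by rewrite mul0r ltxx.
have k_gt0 : 0 < k.
  rewrite lt0r ler0n andbT; apply: contraTneq mean_gt0 => ->.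
  by rewrite invr0 mulr0 ltxx.
have /andP[W_lo W_hi] : lo * k <= W <= hi * k.
  rewrite /k !mulr_natr -!sumr_const.
  by apply/andP; split; apply: ler_sum => s /w_bnd /andP[].
have /andP[G_lo G_hi] : lo * F <= G <= hi * F.
  rewrite /F !mulr_sumr.
  by apply/andP; split; apply: ler_sum => s Ps;
    rewrite ler_wpM2r ?f_ge0 //; case/andP: (w_bnd s Ps).
have hi_gt0 : 0 < hi.
  by have := le_trans W_lo W_hi; rewrite ler_pM2r // => /(lt_le_trans lo_gt0).
have W_gt0 : 0 < W by apply: lt_le_trans W_lo; rewrite mulr_gt0.
have -> : G / W / (F / k) = (G * k) / (W * F) by rewrite invf_div mulf_div mulrC.
have loF_gt0 : 0 < lo * F by rewrite mulr_gt0.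
have hiF_gt0 : 0 < hi * F by rewrite mulr_gt0.
have lok_gt0 : 0 < lo * k by rewrite mulr_gt0.
have hik_gt0 : 0 < hi * k by rewrite mulr_gt0.
apply/andP; split.
- by rewrite ler_pdivlMr ?mulr_gt0 // mulrAC ler_pdivrMr //; nra.
- by rewrite ler_pdivlMr // mulrAC ler_pdivrMr ?mulr_gt0 //; nra.
Qed.

Section Draws.
Variables (T : finType) (n : nat).

Let draws := [set S : {set T} | #|S| == n].
Let draws_with t := [set S in draws | t \in S].

Lemma card_draws_with t t' : #|draws_with t| = #|draws_with t'|.
Proof.
suff le_draws_with u u' : (#|draws_with u| <= #|draws_with u'|)%N.
  by apply/eqP; rewrite eqn_leq !le_draws_with.
rewrite -(card_imset _ (imset_inj (@perm_inj _ (tperm u u')))).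
apply/subset_leq_card/subsetP => _ /imsetP[S + ->]; rewrite !inE => /andP[nS uS].
rewrite card_imset ?nS; last exact: perm_inj.
by rewrite -{1}(tpermL u u') mem_imset //; exact: perm_inj.
Qed.

Lemma sum_draws_exchange (M : nmodType) (f : T -> M) :
  \sum_(S in draws) \sum_(t in S) f t = \sum_t f t *+ #|draws_with t|.
Proof.
rewrite (exchange_big_dep xpredT) //=; apply: eq_bigr => t _.
by rewrite -sumr_const; apply: eq_bigl => S; rewrite !inE.
Qed.

Lemma card_draws_with_mul t : (#|draws_with t| * #|T| = n * 'C(#|T|, n))%N.
Proof.
have -> : (#|draws_with t| * #|T| = \sum_(t' : T) #|draws_with t'|)%N.
  rewrite (eq_bigr (fun=> #|draws_with t|)) => [|t' _]; last exact: card_draws_with.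
  by rewrite sum_nat_const mulnC.
rewrite -card_draws mulnC -sum_nat_const.
transitivity (\sum_(t' : T) \sum_(S in draws | t' \in S) 1)%N.
  by apply: eq_bigr => t' _; rewrite -sum1_card; apply: eq_bigl => S; rewrite !inE.
rewrite (exchange_big_dep (mem draws)) /=; last by move=> t' S _ /andP[].
apply: eq_bigr => S; rewrite inE => /eqP <-.
by rewrite eqxx sum1_card.
Qed.

Lemma sum_draws_sum (M : nmodType) (f : T -> M) :
  (\sum_(S in draws) \sum_(t in S) f t) *+ #|T| = (\sum_t f t) *+ (n * 'C(#|T|, n)).
Proof.
rewrite sum_draws_exchange -!sumrMnl; apply: eq_bigr => t _.
by rewrite -mulrnA card_draws_with_mul.
Qed.

Lemma mean_draws_mean (R : numFieldType) (f : T -> R) : (0 < n <= #|T|)%N ->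
  (\sum_(S in draws) ((\sum_(t in S) f t) / n%:R)) / #|draws|%:R
    = (\sum_t f t) / #|T|%:R.
Proof.
case/andP=> n_gt0 n_le_T; rewrite -mulr_suml card_draws -mulrA -invfM -natrM.
have T_gt0 : (0 < #|T|)%N by apply: leq_trans n_le_T.
apply/eqP; rewrite eqr_div ?pnatr_eq0 -?lt0n ?muln_gt0 ?n_gt0 ?bin_gt0 //.
by rewrite !mulr_natr sum_draws_sum.
Qed.
End Draws.

Lemma prodr_if_mem (R : comPzSemiRingType) (T : finType) (S : {set T}) (a b : R) :
  \prod_t (if t \in S then a else b) = a ^+ #|S| * b ^+ (#|T| - #|S|).
Proof.
rewrite big_if /= !prodr_const -(cardsC S) addKn; congr (_ * _ ^+ _).
by apply: eq_card => t; rewrite inE.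
Qed.

Section SampledSet.
Variables (R : realFieldType) (N V : nat) (p : 'I_V -> 'I_N -> R) (i : 'I_N).

Definition prob_sampled (S : {set 'I_V}) : R :=
  \prod_(t < V) (if t \in S then p t i else 1 - p t i).

Lemma prob_sampled_bounds (l u : R) (S : {set 'I_V}) :
  (forall t, l <= p t i <= u) -> 0 <= l -> u <= 1 ->
  l ^+ #|S| * (1 - u) ^+ (V - #|S|) <= prob_sampled S
    <= u ^+ #|S| * (1 - l) ^+ (V - #|S|).
Proof.
move=> p_bnd l_ge0 u_le1.
have prodE (a b : R) :
    \prod_(t < V) (if t \in S then a else b) = a ^+ #|S| * b ^+ (V - #|S|).
  by rewrite prodr_if_mem card_ord.
rewrite -!prodE.
by apply/andP; split; apply: ler_prod => t _; have /andP[] := p_bnd t;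
  case: (t \in S) => ? ?; apply/andP; split; lra.
Qed.

Hypothesis p_sum1 : forall t, \sum_(k < N) p t k = 1.

Lemma sum_prob_sampled (S : {set 'I_V}) :
  \sum_(a | sampled i a == S) prob p a = prob_sampled S.
Proof.
(* In the expansion of prod_t sum_k q t k, the term of an assignment a is
   prob p a if a samples exactly S, and 0 otherwise. *)
pose q t k := if (k == i) == (t \in S) then p t k else 0.
have -> : prob_sampled S = \prod_(t < V) \sum_(k < N) q t k.
  apply: eq_bigr => t _; rewrite /q; case: (t \in S).
    by rewrite -big_mkcond /= (big_pred1 i) // => k; rewrite /= eqb_id.
  rewrite -big_mkcond /= -(p_sum1 t) (bigD1 i) //= addrAC subrr add0r.
  by apply: eq_bigl => k; rewrite eqbF_neg.
rewrite bigA_distr_bigA /= big_mkcond /=; apply: eq_bigr => a _.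
case: eqP => [aS|aS].
  by apply: eq_bigr => t _; rewrite /q -aS /sampled inE eqxx.
have /existsP[t /negbTE at_S] : [exists t, (a t == i) != (t \in S)].
  apply: contra_notT aS => /existsPn a_S; apply/setP => t; rewrite /sampled inE.
  by move: (a_S t); rewrite negbK => /eqP.
by rewrite (bigD1 t) //= /q at_S mul0r.
Qed.

Lemma sum_prob_Vi_sampled (n : nat) (g : {set 'I_V} -> R) :
  \sum_(a | Vi i a == n) prob p a * g (sampled i a)
    = \sum_(S in [set S : {set 'I_V} | #|S| == n]) prob_sampled S * g S.
Proof.
rewrite (partition_big (sampled i) (mem [set S : {set 'I_V} | #|S| == n])) /=;
  last by move=> a; rewrite inE.
apply: eq_bigr => S; rewrite inE => /eqP nS.
rewrite -sum_prob_sampled mulr_suml; apply: eq_big => [a|a /andP[_ /eqP ->] //].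
by rewrite /Vi; case: (sampled i a =P S) => [->|]; rewrite ?nS ?eqxx ?andbF.
Qed.

Lemma cond_exp_Lam_sampled (M : nat) (x : 'I_V -> 'I_M -> bool) (j : 'I_M) (n : nat) :
  cond_exp_Lam x p i j n
    = (\sum_(S in [set S : {set 'I_V} | #|S| == n])
         prob_sampled S * ((\sum_(t in S) (x t j)%:R) / n%:R))
      / \sum_(S in [set S : {set 'I_V} | #|S| == n]) prob_sampled S.
Proof.
rewrite /cond_exp_Lam /prob_Vi; congr (_ / _).
  rewrite (sum_prob_Vi_sampled _ (fun S => (\sum_(t in S) (x t j)%:R) / #|S|%:R)).
  by apply: eq_bigr => S; rewrite inE => /eqP ->.
rewrite (eq_bigr (fun a => prob p a * 1)) => [|a _]; last by rewrite mulr1.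
by rewrite (sum_prob_Vi_sampled _ (fun=> 1)); apply: eq_bigr => S _; rewrite mulr1.
Qed.
End SampledSet.

Section NearlyUniformWeights.
Variables (R : realFieldType) (y : R) (V n : nat).

Definition unif_lo : R := y^-1 - (y ^+ 3)^-1.
Definition unif_hi : R := y^-1 + (y ^+ 3)^-1.

Definition weight_lo : R := unif_lo ^+ n * (1 - unif_hi) ^+ (V - n).
Definition weight_hi : R := unif_hi ^+ n * (1 - unif_lo) ^+ (V - n).

Hypothesis y_ge3 : 3 <= y.

Let y_neq0 : y != 0. Proof. by rewrite gt_eqF //; move: y_ge3; lra. Qed.
Let y2_gt1 : 1 < y ^+ 2. Proof. by rewrite expr2; move: y_ge3; nra. Qed.
Let y3_gt : y ^+ 2 + 1 < y ^+ 3.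
Proof. by rewrite exprS; move: y_ge3 y2_gt1; nra. Qed.
Let y3_gt0 : 0 < y ^+ 3. Proof. by move: y2_gt1 y3_gt; lra. Qed.

Let unif_loE : unif_lo = (y ^+ 2 - 1) / y ^+ 3.
Proof. by rewrite /unif_lo; field. Qed.

Let unif_hiE : unif_hi = (y ^+ 2 + 1) / y ^+ 3.
Proof. by rewrite /unif_hi; field. Qed.

Lemma unif_lo_gt0 : 0 < unif_lo.
Proof. by rewrite unif_loE divr_gt0 ?subr_gt0. Qed.

Lemma unif_hi_lt1 : unif_hi < 1.
Proof. by rewrite unif_hiE ltr_pdivrMr // mul1r. Qed.

Lemma weight_lo_gt0 : 0 < weight_lo.
Proof.
by rewrite mulr_gt0 // exprn_gt0 ?unif_lo_gt0 // subr_gt0 unif_hi_lt1.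
Qed.

Lemma unif_ratios :
  [/\ 1 + 2 / (y ^+ 2 - 1) = unif_hi / unif_lo,
      1 + 2 / (y ^+ 3 - y ^+ 2 - 1) = (1 - unif_lo) / (1 - unif_hi),
      1 - 2 / (y ^+ 2 + 1) = unif_lo / unif_hi &
      1 - 2 / (y ^+ 3 - y ^+ 2 + 1) = (1 - unif_hi) / (1 - unif_lo)].
Proof.
rewrite /unif_lo /unif_hi; split; field;
  by rewrite y_neq0 /=; apply: lt0r_neq0; rewrite -?exprSr; move: y2_gt1 y3_gt; lra.
Qed.

End NearlyUniformWeights.

Lemma xi0E (R : realFieldType) (N V n : nat) : (3 : R) <= N%:R ->
  xi0 R N V n = weight_lo N%:R V n / weight_hi N%:R V n.
Proof.
move=> N_ge3; rewrite /xi0; have [_ _ -> ->] := unif_ratios N_ge3.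
by rewrite !expr_div_n mulf_div.
Qed.

Lemma xi1E (R : realFieldType) (N V n : nat) : (3 : R) <= N%:R ->
  xi1 R N V n = weight_hi N%:R V n / weight_lo N%:R V n.
Proof.
move=> N_ge3; rewrite /xi1; have [-> -> _ _] := unif_ratios N_ge3.
by rewrite !expr_div_n mulf_div.
Qed.

Unset Implicit Arguments. Set Strict Implicit.

Theorem lemma7 (R : realFieldType) (N M V : nat)
  (x : 'I_V -> 'I_M -> bool) (p : 'I_V -> 'I_N -> R) :
  (2 < N)%N ->
  nearly_uniform p ->
  forall (i : 'I_N) (j : 'I_M) (n : nat),
    (0 < n)%N -> 0 < prob_Vi p i n -> 0 < Lam_j R x j ->
    xi0 R N V n <= cond_exp_Lam x p i j n / Lam_j R x j <= xi1 R N V n.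
Proof.
move=> N_gt2 [p_sum1 p_bnd] i j n n_gt0 Vi_gt0 Lam_gt0.
have N_ge3 : (3 : R) <= N%:R by rewrite ler_nat.
have n_le_V : (n <= V)%N.
  have /existsP[a /eqP <-] : [exists a : {ffun 'I_V -> 'I_N}, Vi i a == n].
    apply: contraTT Vi_gt0 => /existsPn Vi_neq.
    by rewrite /prob_Vi big_pred0 ?ltxx // => a; exact/negbTE/Vi_neq.
  by rewrite -[V in (_ <= V)%N]card_ord max_card.
rewrite xi0E // xi1E // cond_exp_Lam_sampled //.
rewrite /Lam_j -[V in _ / V%:R]card_ord -(mean_draws_mean (n := n)) in Lam_gt0 *;
  last by rewrite card_ord n_gt0.
apply: weighted_mean_ratio_bounds => //; first exact: weight_lo_gt0.
- move=> S; rewrite inE => /eqP <-; apply: prob_sampled_bounds => [t||].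
  + exact: p_bnd.
  + exact/ltW/unif_lo_gt0.
  + exact/ltW/unif_hi_lt1.
- by move=> S _; rewrite divr_ge0 ?sumr_ge0.
Qed.
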